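(* For all matches $(p,\sigma)$, $(q,\rho)$ with $p,\sigma\sqsubseteq q,\rho$: for every pattern $r$ and substitution $\theta$ such that $\{r\,\|\,p\}=(\theta,\sigma)$, it holds that $\{r\,\|\,q\}=(\theta,\rho)$.
   Context: CPC patterns over a countable set of names: $p ::= \lambda x \mid x \mid \ulcorner x\urcorner \mid p\bullet p$ (binding name, variable name, protected name, compound). ${\sf bn}(p)$, ${\sf vn}(p)$, ${\sf pn}(p)$ are the sets of binding, variable and protected names of $p$; ${\sf fn}(p)={\sf vn}(p)\cup{\sf pn}(p)$. Patterns are well formed (binding names pairwise distinct and distinct from free names). Communicable patterns contain no protected or binding names. A substitution is a finite partial function from names to communicable patterns; $\hat\sigma$ acts on patterns by $\hat\sigma x=x$, $\hat\sigma\ulcorner x\urcorner=\ulcorner x\urcorner$, $\hat\sigma(\lambda x)=\sigma(x)$ if $x\in{\sf dom}(\sigma)$ else $\lambda x$, $\hat\sigma(p\bullet q)=\hat\sigma p\bullet\hat\sigma q$. Unification $\{p\,\|\,q\}$ is a pair of substitutions or undefined: $\{x\|x\}=\{x\|\ulcorner x\urcorner\}=\{\ulcorner x\urcorner\|x\}=\{\ulcorner x\urcorner\|\ulcorner x\urcorner\}=(\{\},\{\})$; $\{\lambda x\|q\}=(\{q/x\},\{\})$ if $q$ is communicable; $\{p\|\lambda x\}=(\{\},\{p/x\})$ if $p$ is communicable; $\{p_1\bullet p_2\|q_1\bullet q_2\}=(\sigma_1\cup\sigma_2,\rho_1\cup\rho_2)$ if $\{p_i\|q_i\}=(\sigma_i,\rho_i)$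 for $i=1,2$; undefined otherwise. A match $(p,\sigma)$ is a pattern $p$ and substitution $\sigma$ with ${\sf dom}(\sigma)={\sf bn}(p)$. Compatibility $p,\sigma\sqsubseteq q,\rho$ is the least relation between matches with: $p,\sigma\sqsubseteq\lambda y,\{\hat\sigma p/y\}$ if ${\sf fn}(p)=\emptyset$; $n,\{\}\sqsubseteq n,\{\}$; $\ulcorner n\urcorner,\{\}\sqsubseteq\ulcorner n\urcorner,\{\}$; $\ulcorner n\urcorner,\{\}\sqsubseteq n,\{\}$; $p_1\bullet p_2,\sigma_1\cup\sigma_2\sqsubseteq q_1\bullet q_2,\rho_1\cup\rho_2$ if $p_i,\sigma_i\sqsubseteq q_i,\rho_i$ for $i=1,2$. *)

From HB Require Import structures.
From mathcomp Require Import all_boot.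
From mathcomp Require Import finmap.
Set Implicit Arguments. Unset Strict Implicit. Unset Printing Implicit Defensive.
Local Open Scope fmap_scope.

Definition name := nat.

(* CPC patterns: p ::= \lambda x | x | <x> | p . p *)
Inductive pattern : Type :=
| PBind of name
| PVar of name
| PProt of name
| PComp of pattern & pattern.

Definition pattern_eq_dec (p q : pattern) : {p = q} + {p <> q}.
Proof. decide equality; match goal with |- sumbool (?a = ?b) _ => exact: (decP (a =P b)) end.
Defined.

Definition pattern_eqb (p q : pattern) : bool := if pattern_eq_dec p q then true else false.
Lemma pattern_eqP : Equality.axiom pattern_eqb.
Proof. by move=> p q; rewrite /pattern_eqb; case: pattern_eq_dec => h; constructor. Qed.
HB.instance Definition _ := hasDecEq.Build pattern pattern_eqP.

(* Binding / variable / protected names, as lists (bn keeps multiplicities so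
   that pairwise distinctness can be expressed). *)
Fixpoint bn (p : pattern) : seq name :=
  match p with PBind x => [:: x] | PVar _ | PProt _ => [::] | PComp p1 p2 => bn p1 ++ bn p2 end.
Fixpoint vn (p : pattern) : seq name :=
  match p with PVar x => [:: x] | PBind _ | PProt _ => [::] | PComp p1 p2 => vn p1 ++ vn p2 end.
Fixpoint pn (p : pattern) : seq name :=
  match p with PProt x => [:: x] | PBind _ | PVar _ => [::] | PComp p1 p2 => pn p1 ++ pn p2 end.
Definition fn (p : pattern) : seq name := vn p ++ pn p.

Definition well_formed (p : pattern) : bool :=
  uniq (bn p) && all (fun x => x \notin fn p) (bn p).

Fixpoint communicable (p : pattern) : bool :=
  match p with PVar _ => true | PBind _ | PProt _ => false
  | PComp p1 p2 => communicable p1 && communicable p2 end.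

Definition subst := {fmap name -> pattern}.
Definition is_subst (s : subst) : Prop :=
  forall x v, s.[? x] = Some v -> communicable v.

Definition empty_subst : subst := [fmap].
Definition single_subst (x : name) (v : pattern) : subst := [fmap].[x <- v].

(* Union of partial functions: defined iff they agree on common names. *)
Definition union (s1 s2 : subst) : option subst :=
  if all (fun k => if s2.[? k] is Some v then s1.[? k] == Some v else true)
         (enum_fset (domf s1))
  then Some (catf s1 s2) else None.

Fixpoint apply_subst (s : subst) (p : pattern) : pattern :=
  match p with
  | PBind x => if s.[? x] is Some v then v else PBind x
  | PVar x => PVar x
  | PProt x => PProt x
  | PComp p1 p2 => PComp (apply_subst s p1) (apply_subst s p2)
  end.

Fixpoint unify (p q : pattern) : option (subst * subst) :=
  match p, q with
  | PVar x, PVar y | PVar x, PProt y | PProt x, PVar y | PProt x, PProt y =>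
      if x == y then Some (empty_subst, empty_subst) else None
  | PBind x, _ => if communicable q then Some (single_subst x q, empty_subst) else None
  | _, PBind y => if communicable p then Some (empty_subst, single_subst y p) else None
  | PComp p1 p2, PComp q1 q2 =>
      match unify p1 q1, unify p2 q2 with
      | Some (s1, r1), Some (s2, r2) =>
          match union s1 s2, union r1 r2 with
          | Some s, Some r => Some (s, r)
          | _, _ => None
          end
      | _, _ => None
      end
  | _, _ => None
  end.

Definition is_match (p : pattern) (s : subst) : Prop :=
  well_formed p /\ is_subst s /\ (forall x, (x \in domf s) = (x \in bn p)).

Inductive compat : pattern -> subst -> pattern -> subst -> Prop :=
| compat_bind p s y :
    is_match p s -> fn p = [::] ->
    compat p s (PBind y) (single_subst y (apply_subst s p))
| compat_var n : compat (PVar n) empty_subst (PVar n) empty_subst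
| compat_prot n : compat (PProt n) empty_subst (PProt n) empty_subst
| compat_prot_var n : compat (PProt n) empty_subst (PVar n) empty_subst
| compat_comp p1 p2 q1 q2 s1 s2 r1 r2 s r :
    compat p1 s1 q1 r1 -> compat p2 s2 q2 r2 ->
    union s1 s2 = Some s -> union r1 r2 = Some r ->
    compat (PComp p1 p2) s (PComp q1 q2) r.

From mathcomp Require Import all_boot.
From mathcomp Require Import finmap.
Local Open Scope fmap_scope.
Set Implicit Arguments. Unset Strict Implicit.

(* At a binder λy of q the pattern p
   is closed, so a unification {r || p} = (θ, σ) forces r to be communicable,
   θ = {} and σ̂p = r; hence {r || λy} = ({}, {σ̂p/y}).  At a compound, unifying
   the components of r with p1 and p2 yields substitutions with domains bn p1
   and bn p2 whose union is σ, so they are the restrictions σ1, σ2 of σ given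
   by the derivation, and the induction hypotheses apply componentwise. *)

Lemma union_catf s1 s2 s : union s1 s2 = Some s -> s = catf s1 s2.
Proof. by rewrite /union; case: ifP => // _ [<-]. Qed.

Lemma domf_union s1 s2 s k :
  union s1 s2 = Some s -> (k \in domf s) = (k \in domf s1) || (k \in domf s2).
Proof. by move=> /union_catf ->; rewrite mem_catf. Qed.

Lemma fnd_union_l s1 s2 s :
  union s1 s2 = Some s -> {in domf s1, forall k, s.[? k] = s1.[? k]}.
Proof.
rewrite /union; case: ifP => // /allP agree [<-] k ks1.
rewrite fnd_cat; case: ifP => // ks2.
by move/(_ k ks1): agree; rewrite in_fnd => /eqP ->; rewrite -in_fnd.
Qed.

Lemma fnd_union_r s1 s2 s :
  union s1 s2 = Some s -> {in domf s2, forall k, s.[? k] = s2.[? k]}.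
Proof. by move=> /union_catf -> k ks2; rewrite fnd_cat ks2. Qed.

Lemma fmap_eq_restrict (K : choiceType) (V : Type) (s s1 s1' : {fmap K -> V}) :
  {in domf s1, forall k, s.[? k] = s1.[? k]} ->
  {in domf s1', forall k, s.[? k] = s1'.[? k]} ->
  domf s1 =i domf s1' -> s1 = s1'.
Proof.
move=> eq1 eq1' dom; apply/fmapP => k.
case ks1: (k \in domf s1); first by rewrite -eq1 // eq1' -?dom.
by rewrite !not_fnd -?dom ?ks1.
Qed.

Lemma bn_communicable p : communicable p -> bn p = [::].
Proof. by elim: p => //= p1 IH1 p2 IH2 /andP[/IH1 -> /IH2 ->]. Qed.

Lemma closed_not_communicable p : fn p = [::] -> ~~ communicable p.
Proof.
rewrite /fn => closed; apply/negP => Cp.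
suff : vn p != [::] by case: (vn p) closed.
by elim: p Cp {closed} => //= p1 IH1 p2 _ /andP[/IH1]; case: (vn p1).
Qed.

Lemma fn_comp_nil p1 p2 :
  fn (PComp p1 p2) = [::] -> fn p1 = [::] /\ fn p2 = [::].
Proof. by rewrite /fn /=; case: (vn p1) (vn p2) (pn p1) (pn p2) => [|? ?] [|? ?] [|? ?] []. Qed.

Lemma apply_subst_union_l s1 s2 s p :
  union s1 s2 = Some s -> {subset bn p <= domf s1} ->
  apply_subst s p = apply_subst s1 p.
Proof.
move=> U; elim: p => [b|b|b|p1 IH1 p2 IH2] //= sub.
  by rewrite (fnd_union_l U) // sub // inE.
by rewrite IH1 ?IH2 // => x bx; apply: sub; rewrite mem_cat bx ?orbT.
Qed.

Lemma apply_subst_union_r s1 s2 s p :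
  union s1 s2 = Some s -> {subset bn p <= domf s2} ->
  apply_subst s p = apply_subst s2 p.
Proof.
move=> U; elim: p => [b|b|b|p1 IH1 p2 IH2] //= sub.
  by rewrite (fnd_union_r U) // sub // inE.
by rewrite IH1 ?IH2 // => x bx; apply: sub; rewrite mem_cat bx ?orbT.
Qed.

Lemma unify_domf r p th s : unify r p = Some (th, s) -> domf s =i bn p.
Proof.
elim: r p th s => [a|a|a|r1 IH1 r2 IH2] [b|b|b|p1 p2] th s //=; last first.
  case E1: (unify r1 p1) => [[t1 s1]|] //; case E2: (unify r2 p2) => [[t2 s2]|] //.
  case: (union t1 t2) => // t; case U: (union s1 s2) => [u|] // [_ <-] x.
  by rewrite (domf_union _ U) mem_cat (IH1 _ _ _ E1 x) (IH2 _ _ _ E2 x).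
all: try case: ifP => // cond; move=> [_ <-] x; rewrite ?mem_setf ?inE //.
all: by case/andP: cond => /bn_communicable -> /bn_communicable ->.
Qed.

Lemma unify_closed p r th s :
  fn p = [::] -> unify r p = Some (th, s) ->
  [/\ communicable r, th = empty_subst & apply_subst s p = r].
Proof.
elim: p r th s => [b|b|b|p1 IH1 p2 IH2] r th s //= closed.
- case: r => [a|a|a|r1 r2] //=; try case: ifP => // Cr;
    by move=> [<- <-]; rewrite /single_subst fnd_set eqxx.
- have [cl1 cl2] := fn_comp_nil closed.
  case: r => [a|a|a|r1 r2] //=.
    by case: ifP => // /andP[]; rewrite (negbTE (closed_not_communicable cl1)).
  case E1: (unify r1 p1) => [[t1 s1]|] //; case E2: (unify r2 p2) => [[t2 s2]|] //.
  have [C1 -> A1] := IH1 _ _ _ cl1 E1; have [C2 -> A2] := IH2 _ _ _ cl2 E2.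
  have -> : union empty_subst empty_subst = Some empty_subst by rewrite /union /= cat0f.
  case U: (union s1 s2) => [u|] // [<- <-]; split => //; first by rewrite C1 C2.
  rewrite -A1 -A2 (apply_subst_union_l U) ?(apply_subst_union_r U) // => x;
    by rewrite ?(unify_domf E1) ?(unify_domf E2).
Qed.

Lemma unify_bind_r r y :
  communicable r -> unify r (PBind y) = Some (empty_subst, single_subst y r).
Proof. by case: r => //= r1 r2 ->. Qed.

Lemma compat_domf p s q rr : compat p s q rr -> domf s =i bn p.
Proof.
elim=> {p s q rr} // [p s y [_ [_ dom]] _ | p1 p2 q1 q2 s1 s2 r1 r2 s r _ IH1 _ IH2 U _].
  exact: dom.
by move=> x; rewrite (domf_union _ U) mem_cat IH1 IH2.
Qed.

Lemma compat_communicable p s q rr :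
  compat p s q rr -> communicable p -> q = p /\ rr = s.
Proof.
elim=> {p s q rr} //.
- by move=> p s y _ /closed_not_communicable /negbTE ->.
- move=> p1 p2 q1 q2 s1 s2 r1 r2 s r _ IH1 _ IH2 U V /andP[/IH1[-> e1] /IH2[-> e2]].
  by subst r1 r2; rewrite U in V; case: V.
Qed.

Lemma compat_unify p s q rr :
  compat p s q rr ->
  forall r th, unify r p = Some (th, s) -> unify r q = Some (th, rr).
Proof.
elim=> {p s q rr} //.
- move=> p s y _ closed r th /(unify_closed closed) [Cr -> ->].
  exact: unify_bind_r.
- by move=> n [x|x|x|r1 r2] th.
- move=> p1 p2 q1 q2 s1 s2 r1 r2 s r C1 IH1 C2 IH2 U V [x|x|x|r1' r2'] th //=.
    (* r = λx forces p to be communicable, and on such p compatibility is the identity. *)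
    case: ifP => // Cp.
    by have [[-> ->] ->] := compat_communicable (compat_comp C1 C2 U V) Cp; rewrite /= Cp.
  case E1: (unify r1' p1) => [[t1 s1']|] //; case E2: (unify r2' p2) => [[t2 s2']|] //.
  case T: (union t1 t2) => [t|] //; case U': (union s1' s2') => [u|] // [<- eq_us].
  subst u.
  have e1 : s1' = s1.
    apply: (fmap_eq_restrict (fnd_union_l U') (fnd_union_l U)) => x.
    by rewrite (unify_domf E1) (compat_domf C1).
  have e2 : s2' = s2.
    apply: (fmap_eq_restrict (fnd_union_r U') (fnd_union_r U)) => x.
    by rewrite (unify_domf E2) (compat_domf C2).
  by subst s1' s2'; rewrite (IH1 _ _ E1) (IH2 _ _ E2) T V.
Qed.

Theorem proposition3p20 (p q : pattern) (sigma rho : subst) :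
  is_match p sigma -> is_match q rho ->
  compat p sigma q rho ->
  forall (r : pattern) (theta : subst),
    well_formed r -> is_subst theta ->
    unify r p = Some (theta, sigma) ->
    unify r q = Some (theta, rho).
Proof. by move=> _ _ C r theta _ _; exact: compat_unify. Qed.
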